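(* Let $n \ge 2$ and let $S = s_1, s_2, \ldots, s_m$ be a sequence of messages, each drawn from a fixed set $M$ of $n$ possible messages, which a number of clients want to send to a server (each message of $S$ is held by some client). Suppose there is a dynamic instantaneous compression algorithm which, when applied to $S$, produces an encoding of $B$ bits. Then for every $k \ge 1$ there is a dynamic asymmetric communication protocol for sending $S$ to the server with which the server sends at most $O(n^{1/k}\log n)$ bits to each client (for each message that client sends), and the clients send, in total, at most $kB + 2|S|$ bits.
   Context: A code-tree over the alphabet $M$ is a binary tree in which left edges are labelled $0$, right edges are labelled $1$, and leaves are labelled with elements of $M$; the codeword of a leaf's label is the binary string on the path from the root to that leaf. A dynamic instantaneous (prefix-free) compression algorithm consists of an encoder and a decoder which each maintain a code-tree, initialized and updated by the same deterministic rule depending only on the characters processed so far: the encoder makes a single pass over the input string, and upon reading each character $a$ it writes the codeword of $a$ in its current code-tree and then updates the code-tree; the decoder reads the encoding codeword by codeword, outputs the corresponding character and updates its code-tree in the same way. The encoding of $S$ is the concatenation of the codewords written, and $B$ is its length in bits. In the communication setting, at any time the server knows all messages it has received so far, while each client knows only its own messages and does not observe communication between the server or other clients; the server has no knowledge of the distribution of the messages (this is what ''dynamic'' means for a protocol). The protocol must allow the server to recover every message of $S$. Logarithms are base 2; the $O(\cdot)$ is as $n \to \infty$. *)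

From mathcomp Require Import all_boot.
From Stdlib Require Import Reals.

Set Implicit Arguments.
Unset Strict Implicit.
Unset Printing Implicit Defensive.

(* A binary tree: [Node l r] has left edge labelled 0 (false) and right *)
(* edge labelled 1 (true); [CEmpty] marks an absent child (so nodes     *)
(* with fewer than two children are allowed); leaves carry labels in M. *)
Inductive ctree (M : Type) : Type :=
| CEmpty : ctree M
| CLeaf : M -> ctree M
| CNode : ctree M -> ctree M -> ctree M.
Arguments CEmpty {M}.

Fixpoint leaves (M : Type) (t : ctree M) : seq (M * bitseq) :=
  match t with
  | CEmpty => [::]
  | CLeaf a => [:: (a, [::])]
  | CNode l r => [seq (p.1, false :: p.2) | p <- leaves l]
                 ++ [seq (p.1, true :: p.2) | p <- leaves r]
  end.

Definition labels (M : Type) (t : ctree M) : seq M := [seq p.1 | p <- leaves t].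

(* the codeword of a (meaningful when a labels exactly one leaf) *)
Definition codeword (M : eqType) (t : ctree M) (a : M) : bitseq :=
  head [::] [seq p.2 | p <- leaves t & p.1 == a].

(* A dynamic instantaneous compression algorithm: the code-tree used   *)
(* after having processed the characters [h] is [A h].                 *)
Definition dyn_code (M : Type) := seq M -> ctree M.

Definition encodable (M : eqType) (A : dyn_code M) (S : seq M) : Prop :=
  forall i a, onth S i = Some a ->
    uniq (labels (A (take i S))) /\ a \in labels (A (take i S)).

Definition enc_length (M : eqType) (A : dyn_code M) (S : seq M) : nat :=
  sumn [seq size (codeword (A (take p.1 S)) p.2) | p <- zip (iota 0 (size S)) S].

(* Messages are sent one after the other; the i-th message S_i, held   *)
(* by client [owner i], is sent through a bit-by-bit interactive       *)
(* exchange between the server and that client.  Clients are named by  *)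
(* natural numbers.                                                    *)
(*  - server knowledge: the list of all previous (client, message,      *)
(*    transcript) triples, the identity of the current client, and the  *)
(*    current transcript;                                               *)
(*  - client knowledge: its identity, the list of ITS OWN previous      *)
(*    (message, transcript) pairs, its current message and the current  *)
(*    transcript (it sees nothing of other clients' exchanges);         *)
(*  - whose turn it is to send the next bit (or whether the exchange is *)
(*    over: None) is a function of knowledge common to both parties.   *)
(* The protocol is fixed in advance, independently of S (dynamic: the  *)
(* server knows nothing of the distribution of the messages).          *)
Record protocol (M : Type) := Protocol {
  turn : nat -> seq (M * bitseq) -> bitseq -> option bool; (* Some true: server speaks *)
  srv_bit : seq (nat * M * bitseq) -> nat -> bitseq -> bool;
  cli_bit : nat -> seq (M * bitseq) -> M -> bitseq -> bool;
  srv_out : seq (nat * M * bitseq) -> nat -> bitseq -> M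
}.

Definition valid_run (tu : bitseq -> option bool) (sb cb : bitseq -> bool)
    (t : bitseq) : Prop :=
  tu t = None /\
  forall j, j < size t -> exists p : bool,
    tu (take j t) = Some p /\
    nth false t j = (if p then sb (take j t) else cb (take j t)).

Definition server_bits (tu : bitseq -> option bool) (t : bitseq) : nat :=
  count (fun j => tu (take j t) == Some true) (iota 0 (size t)).
Definition client_bits (tu : bitseq -> option bool) (t : bitseq) : nat :=
  count (fun j => tu (take j t) == Some false) (iota 0 (size t)).

Section Run.
Variables (M : eqType) (P : protocol M) (S : seq M) (owner : nat -> nat)
          (ts : seq bitseq).

Definition srv_hist (i : nat) : seq (nat * M * bitseq) :=
  zip (zip (map owner (iota 0 i)) (take i S)) (take i ts).

Definition cli_hist (i : nat) : seq (M * bitseq) :=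
  [seq (x.1.2, x.2) | x <- srv_hist i & x.1.1 == owner i].

Definition turn_at (i : nat) : bitseq -> option bool :=
  turn P (owner i) (cli_hist i).

Definition transmits : Prop :=
  size ts = size S /\
  forall i a t, onth S i = Some a -> onth ts i = Some t ->
    valid_run (turn_at i) (srv_bit P (srv_hist i) (owner i))
              (cli_bit P (owner i) (cli_hist i) a) t
    /\ srv_out P (srv_hist i) (owner i) t = a.

Definition total_client_bits : nat :=
  sumn [seq client_bits (turn_at p.1) p.2 | p <- zip (iota 0 (size ts)) ts].
End Run.

Definition log2 (x : R) : R := (ln x / ln 2)%R.

(* The protocol needs a single round per message.  The server knows all
   previous messages, hence the code-tree T the compression algorithm would
   use now.  With c = ceil(log n) and D = ceil(c / k), it sends, for every
   binary word of length at most D, the label of the leaf of T at that word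
   (if any) on c + 1 bits: about 2^(D+1) (c + 1) = O(n^(1/k) log n) bits.
   If the client's codeword w has length at most D it finds it in this table
   and answers 1w; the server knows where 1w ends because codewords are
   prefix-free.  Otherwise it answers 0 followed by its c-bit index, and
   c <= kD < k|w|.  Either way the client sends at most k|w| + 2 bits, and
   summing over the messages gives kB + 2|S|. *)

From mathcomp Require Import all_boot.
From Stdlib Require Import Reals Lra.
From mathcomp Require Import zify.
(* Reals rebinds [^], [<=], ... on nat to the Peano versions; restore ssrnat's. *)
Import ssrnat.

Set Implicit Arguments.
Unset Strict Implicit.
Unset Printing Implicit Defensive.

Fixpoint bits_of_nat (c x : nat) : bitseq :=
  if c is c'.+1 then odd x :: bits_of_nat c' x./2 else [::].

Fixpoint nat_of_bits (s : bitseq) : nat :=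
  if s is b :: s' then b + 2 * nat_of_bits s' else 0.

Lemma size_bits_of_nat c x : size (bits_of_nat c x) = c.
Proof. by elim: c x => //= c IH x; rewrite IH. Qed.

Lemma bits_of_natK c x : x < 2 ^ c -> nat_of_bits (bits_of_nat c x) = x.
Proof.
elim: c x => [|c IH] x /=; first by case: x.
rewrite expnS => lt_x; rewrite IH; last by lia.
by rewrite -{3}(odd_double_half x) -muln2 mulnC.
Qed.

Fixpoint words (D : nat) : seq bitseq :=
  if D is D'.+1 then [::] :: [seq b :: w | b <- [:: false; true], w <- words D']
  else [:: [::]].

Lemma mem_words D w : (w \in words D) = (size w <= D).
Proof.
elim: D w => [|D IH] [|b w] //=; rewrite inE /= !mem_cat ltnS -IH.
have cons_mem b' s : (b :: w \in [seq b' :: v | v <- s]) = (b == b') && (w \in s).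
  by apply/mapP/andP => [[v v_s [-> ->]] | [/eqP -> w_s]]; last exists w.
by rewrite !cons_mem orbF; case: b {cons_mem} => //=; rewrite orbF.
Qed.

Lemma size_words D : (size (words D)).+1 = 2 ^ D.+1.
Proof.
by elim: D => //= D IH; rewrite !size_cat !size_map expnS -IH /= addn0 mulnS mul2n addnn.
Qed.

Lemma flatten_block (X : Type) (f : X -> bitseq) L (s : seq X) i x0 :
  (forall x, size (f x) = L) -> i < size s ->
  take L (drop (i * L) (flatten (map f s))) = f (nth x0 s i).
Proof.
move=> size_f; elim: s i => [|x s IH] [|i] //= lt_i.
  by rewrite drop0 take_size_cat.
by rewrite mulSn addnC -drop_drop drop_size_cat // IH.
Qed.

Lemma count_ltn_iota n m : count (fun j => j < n) (iota 0 (n + m)) = n.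
Proof.
rewrite iotaD count_cat (eq_in_count (a2 := predT)) ?count_predT ?size_iota; last first.
  by move=> j; rewrite mem_iota => /andP [_ ->].
rewrite (eq_in_count (a2 := pred0)) ?count_pred0 ?addn0 // => j.
by rewrite mem_iota add0n => /andP [le_j _]; rewrite ltnNge le_j.
Qed.

Lemma zip_iota_mkseq (X : Type) (f : nat -> X) n :
  zip (iota 0 n) (mkseq f n) = [seq (i, f i) | i <- iota 0 n].
Proof. by rewrite /mkseq -{1}(map_id (iota 0 n)) zip_map. Qed.

Lemma sumn_map_le_affine (X : eqType) (f g : X -> nat) k b (s : seq X) :
  (forall x, x \in s -> f x <= k * g x + b) ->
  sumn (map f s) <= k * sumn (map g s) + b * size s.
Proof.
elim: s => [|x s IH] //= le_fg.
have := le_fg x (mem_head x s).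
have : sumn (map f s) <= k * sumn (map g s) + b * size s.
  by apply: IH => y y_s; apply: le_fg; rewrite inE y_s orbT.
rewrite mulnDr mulnS; lia.
Qed.

Section CodeTree.
Variable M : eqType.
Implicit Types (T : ctree M) (a : M) (w : bitseq).

Definition leaf_at T w : option M := ohead [seq p.1 | p <- leaves T & p.2 == w].

Lemma leaves_prefix_free T x y p r :
  (x, p) \in leaves T -> (y, p ++ r) \in leaves T -> x = y /\ r = [::].
Proof.
elim: T x y p r => [|b|l IHl rt IHr] x y p r //=.
  by rewrite !mem_seq1 => /eqP [-> ->] /eqP [-> /eqP]; case: r.
rewrite !mem_cat => /orP [] /mapP [[x1 p1] xp1 /= [-> ->]] /orP []
  /mapP [[x2 p2] yp2 /= [-> ]] //= eq_p; subst.
- exact: IHl xp1 yp2.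
- exact: IHr xp1 yp2.
Qed.

Lemma leaf_atP T w y : leaf_at T w = Some y -> (y, w) \in leaves T.
Proof.
rewrite /leaf_at; case E: [seq p <- leaves T | p.2 == w] => [|q rest] //= [<-].
have : q \in [seq p <- leaves T | p.2 == w] by rewrite E mem_head.
by rewrite mem_filter => /andP [/eqP <-]; case: q {E}.
Qed.

Lemma mem_leaves_codeword T a : a \in labels T -> (a, codeword T a) \in leaves T.
Proof.
rewrite /codeword /labels; elim: (leaves T) => //= [[b v] l IH].
case: (eqVneq b a) => [->|ne_ba] /=; first by rewrite !mem_head.
rewrite in_cons eq_sym (negbTE ne_ba) => /IH aw_l.
by rewrite in_cons aw_l orbT.
Qed.

Lemma codeword_leaf T a w :
  uniq (labels T) -> (a, w) \in leaves T -> codeword T a = w.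
Proof.
rewrite /codeword /labels; elim: (leaves T) => [|[b v] l IH] //= /andP [b_l uniq_l].
rewrite inE => /orP [/eqP [-> ->]|aw_l]; first by rewrite eqxx.
case: eqP => [eq_ba|_]; last exact: IH.
by case/negP: b_l; rewrite eq_ba; apply/mapP; exists (a, w).
Qed.

Variable T : ctree M.
Hypothesis uniq_T : uniq (labels T).

Lemma leaf_at_codeword a : a \in labels T -> leaf_at T (codeword T a) = Some a.
Proof.
move=> a_T; have cw_T := mem_leaves_codeword a_T.
rewrite /leaf_at; case E: [seq p <- leaves T | p.2 == codeword T a] => [|[y v] rest] /=.
  have : (a, codeword T a) \in [seq p <- leaves T | p.2 == codeword T a].
    by rewrite mem_filter eqxx cw_T.
  by rewrite E.
have : (y, v) \in [seq p <- leaves T | p.2 == codeword T a] by rewrite E mem_head.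
rewrite mem_filter => /andP [/eqP /= -> yv_T].
have yv_T' : (y, codeword T a ++ [::]) \in leaves T by rewrite cats0.
by have [-> _] := leaves_prefix_free cw_T yv_T'.
Qed.

Lemma leaf_at_codewordP w a : leaf_at T w = Some a -> w = codeword T a.
Proof. by move/leaf_atP/(codeword_leaf uniq_T). Qed.

Lemma leaf_at_take_codeword a m :
  a \in labels T -> m < size (codeword T a) -> leaf_at T (take m (codeword T a)) = None.
Proof.
move=> /mem_leaves_codeword; rewrite -{1}(cat_take_drop m (codeword T a)) => cw_T lt_m.
case E: leaf_at => [y|] //.
have [_ /(congr1 size)] := leaves_prefix_free (leaf_atP E) cw_T.
by rewrite size_drop /=; lia.
Qed.

End CodeTree.

Lemma server_then_client_run (tu : bitseq -> option bool) (sb cb : bitseq -> bool)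
    (s r : bitseq) :
  (forall j, j < size s -> tu (take j s) = Some true /\ sb (take j s) = nth false s j) ->
  (forall j, j < size r ->
     tu (s ++ take j r) = Some false /\ cb (s ++ take j r) = nth false r j) ->
  tu (s ++ r) = None ->
  [/\ valid_run tu sb cb (s ++ r), server_bits tu (s ++ r) = size s
    & client_bits tu (s ++ r) = size r].
Proof.
move=> srv_s cli_r end_r.
have turn_sr j : j < size s + size r -> tu (take j (s ++ r)) = Some (j < size s).
  move=> lt_j; rewrite take_cat; case: ltnP => [/srv_s [] //| le_j].
  by have /cli_r [] : j - size s < size r by lia.
have count_turn b : count (fun j => tu (take j (s ++ r)) == Some b) (iota 0 (size (s ++ r)))
                    = count (fun j => (j < size s) == b) (iota 0 (size s + size r)).
  rewrite size_cat; apply: eq_in_count => j; rewrite mem_iota => /andP [_ lt_j].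
  by rewrite turn_sr.
split.
- split=> // j; rewrite size_cat => lt_j; exists (j < size s); rewrite turn_sr //.
  rewrite take_cat nth_cat; case: ltnP => [/srv_s [] //| le_j].
  by have /cli_r [] : j - size s < size r by lia.
- by rewrite /server_bits count_turn (eq_count (a2 := fun j => j < size s)) ?count_ltn_iota.
- rewrite /client_bits count_turn (eq_count (a2 := predC (fun j => j < size s))).
    have := count_predC (fun j => j < size s) (iota 0 (size s + size r)).
    by rewrite count_ltn_iota size_iota => /addnI.
  by move=> j /=; case: ltnP.
Qed.

Section TableProtocol.
Variables (M : finType) (m0 : M) (c D : nat).
Hypothesis card_le : #|M| <= 2 ^ c.

Definition index_bits (a : M) : bitseq := bits_of_nat c (index a (enum M)).

Lemma size_index_bits a : size (index_bits a) = c.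
Proof. exact: size_bits_of_nat. Qed.

Definition decode_index (s : bitseq) : option M := onth (enum M) (nat_of_bits s).

Lemma index_bitsK a : decode_index (index_bits a) = Some a.
Proof.
have lt_a : index a (enum M) < #|M| by rewrite cardE index_mem mem_enum.
rewrite /decode_index bits_of_natK; last exact: leq_trans lt_a card_le.
by rewrite onthE (nth_map a) ?nth_index ?mem_enum // -cardE.
Qed.

Definition encode_entry (o : option M) : bitseq :=
  if o is Some a then true :: index_bits a else false :: nseq c false.

Definition decode_entry (s : bitseq) : option M :=
  if s is true :: s' then decode_index s' else None.

Lemma encode_entryK o : decode_entry (encode_entry o) = o.
Proof. by case: o => [a|] //=; rewrite index_bitsK. Qed.

Lemma size_encode_entry o : size (encode_entry o) = c.+1.
Proof. by case: o => [a|] /=; rewrite ?size_index_bits ?size_nseq. Qed.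

Definition table (T : ctree M) : bitseq :=
  flatten [seq encode_entry (leaf_at T w) | w <- words D].

Definition table_size : nat := size (words D) * c.+1.

Lemma size_table T : size (table T) = table_size.
Proof.
rewrite /table /table_size; elim: (words D) => //= w ws IH.
by rewrite size_cat size_encode_entry IH mulSn.
Qed.

Definition lookup (tab w : bitseq) : option M :=
  decode_entry (take c.+1 (drop (index w (words D) * c.+1) tab)).

Lemma lookup_table T w : size w <= D -> lookup (table T) w = leaf_at T w.
Proof.
rewrite -mem_words => w_D; rewrite /lookup /table.
rewrite (flatten_block w (fun v => size_encode_entry (leaf_at T v))) ?index_mem //.
by rewrite nth_index // encode_entryK.
Qed.

Definition reply (tab : bitseq) (a : M) : bitseq :=
  if [seq w <- words D | lookup tab w == Some a] is w :: _ then true :: w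
  else false :: index_bits a.

Definition reply_done (tab p : bitseq) : bool :=
  match p with
  | true :: w => lookup tab w != None
  | false :: x => c <= size x
  | [::] => false
  end.

Definition decode_reply (tab p : bitseq) : option M :=
  match p with
  | true :: w => lookup tab w
  | false :: x => decode_index x
  | [::] => None
  end.

Definition table_turn (t : bitseq) : option bool :=
  if size t < table_size then Some true
  else if reply_done (take table_size t) (drop table_size t) then None else Some false.

Definition server_bit (T : ctree M) (t : bitseq) : bool := nth false (table T) (size t).

Definition client_bit (a : M) (t : bitseq) : bool :=
  nth false (reply (take table_size t) a) (size t - table_size).

Definition server_out (t : bitseq) : M :=
  odflt m0 (decode_reply (take table_size t) (drop table_size t)).

Definition transcript (T : ctree M) (a : M) : bitseq := table T ++ reply (table T) a.

Lemma table_turn_reply T p :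
  table_turn (table T ++ p) = if reply_done (table T) p then None else Some false.
Proof.
by rewrite /table_turn size_cat size_table ltnNge leq_addr /= -(size_table T)
  take_size_cat ?drop_size_cat.
Qed.

Variables (T : ctree M) (a : M).
Hypotheses (uniq_T : uniq (labels T)) (a_T : a \in labels T).

Lemma lookup_table_codeword w :
  size w <= D -> (lookup (table T) w == Some a) = (w == codeword T a).
Proof.
move=> w_D; rewrite lookup_table //.
apply/eqP/eqP => [/(leaf_at_codewordP uniq_T) // | ->].
exact: leaf_at_codeword.
Qed.

Lemma reply_table :
  reply (table T) a =
  if size (codeword T a) <= D then true :: codeword T a else false :: index_bits a.
Proof.
rewrite /reply (eq_in_filter (a2 := fun w => w == codeword T a)); last first.
  by move=> w; rewrite mem_words; exact: lookup_table_codeword.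
case E: [seq w <- words D | w == codeword T a] => [|w ws].
  have : codeword T a \notin [seq w <- words D | w == codeword T a] by rewrite E.
  by rewrite mem_filter eqxx mem_words /= => /negbTE ->.
have : w \in [seq w <- words D | w == codeword T a] by rewrite E mem_head.
by rewrite mem_filter mem_words => /andP [/eqP -> ->].
Qed.

Lemma reply_done_take j (r := reply (table T) a) :
  j <= size r -> reply_done (table T) (take j r) = (j == size r).
Proof.
rewrite /r reply_table; case: (leqP (size (codeword T a)) D) => cw_D.
all: case: j => [|m] //=; rewrite ltnS eqSS => le_m.
  rewrite lookup_table; last by rewrite size_take_min geq_min cw_D orbT.
  case: (ltngtP m (size (codeword T a))) le_m => [lt_m _|//|->].
    by rewrite leaf_at_take_codeword.
  by rewrite take_size leaf_at_codeword.
by rewrite size_take_min size_index_bits in le_m *; lia.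
Qed.

Lemma size_reply_le k :
  0 < k -> c <= k * D -> size (reply (table T) a) <= k * size (codeword T a) + 2.
Proof.
move=> k_gt0 c_le; rewrite reply_table; case: (leqP (size (codeword T a)) D) => cw_D /=.
  by have := leq_pmull (size (codeword T a)) k_gt0; lia.
rewrite size_index_bits.
have : k * D.+1 <= k * size (codeword T a) by rewrite leq_mul2l cw_D orbT.
lia.
Qed.

Lemma table_run :
  let t := transcript T a in
  [/\ valid_run table_turn (server_bit T) (client_bit a) t, server_out t = a,
      server_bits table_turn t = table_size
    & client_bits table_turn t = size (reply (table T) a)].
Proof.
rewrite /transcript /=; set tab := table T; set r := reply tab a.
have srv_phase j : j < size tab ->
    table_turn (take j tab) = Some true /\ server_bit T (take j tab) = nth false tab j.
  move=> lt_j; rewrite /table_turn /server_bit size_takel ?(ltnW lt_j) //.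
  by rewrite -(size_table T) lt_j.
have cli_phase j : j < size r ->
    table_turn (tab ++ take j r) = Some false /\ client_bit a (tab ++ take j r) = nth false r j.
  move=> lt_j; rewrite table_turn_reply reply_done_take ?(ltnW lt_j) // ltn_eqF //.
  rewrite /client_bit size_cat size_table addKn -(size_table T) take_size_cat //.
  by rewrite size_takel ?(ltnW lt_j) // nth_take.
have end_phase : table_turn (tab ++ r) = None.
  by rewrite table_turn_reply -{1}[r]take_size reply_done_take ?eqxx.
have [run srv cli] := server_then_client_run srv_phase cli_phase end_phase.
split=> //.
- rewrite /server_out -(size_table T) take_size_cat ?drop_size_cat //= /r reply_table.
  case: ifP => [cw_D|_] /=; last by rewrite index_bitsK.
  by rewrite lookup_table // leaf_at_codeword.
- by rewrite srv size_table.
Qed.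

End TableProtocol.

Section Protocol.
Variables (M : finType) (m0 : M) (c D : nat) (A : dyn_code M).
Hypothesis card_le : #|M| <= 2 ^ c.

Definition history_msgs (h : seq (nat * M * bitseq)) : seq M := [seq x.1.2 | x <- h].

Definition table_protocol : protocol M :=
  Protocol (fun _ _ t => table_turn M c D t)
           (fun h _ t => server_bit c D (A (history_msgs h)) t)
           (fun _ _ a t => client_bit c D a t)
           (fun _ _ t => server_out m0 c D t).

Lemma history_msgs_srv_hist (S : seq M) owner ts i :
  size ts = size S -> i <= size S -> history_msgs (srv_hist S owner ts i) = take i S.
Proof.
move=> size_ts le_i; rewrite /history_msgs /srv_hist.
set owners := map owner (iota 0 i).
have le_So : size (take i S) <= size owners.
  by rewrite size_map size_iota size_take_min; lia.
have le_ot : size (zip owners (take i S)) <= size (take i ts).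
  by rewrite size_zip size_map size_iota !size_take_min; lia.
rewrite -[RHS](unzip2_zip le_So) -[in RHS](unzip1_zip le_ot).
by rewrite /unzip1 /unzip2 -map_comp.
Qed.

Lemma table_protocol_sends (S : seq M) owner k :
  0 < k -> c <= k * D -> encodable A S ->
  exists ts,
    [/\ transmits table_protocol S owner ts,
        forall i t, onth ts i = Some t ->
          server_bits (turn_at table_protocol S owner ts i) t = table_size c D
      & total_client_bits table_protocol S owner ts <= k * enc_length A S + 2 * size S].
Proof.
move=> k_gt0 c_le encS.
pose ts := mkseq (fun i => transcript c D (A (take i S)) (nth m0 S i)) (size S).
have size_ts : size ts = size S by rewrite size_mkseq.
have run_i i : i < size S ->
  let t := transcript c D (A (take i S)) (nth m0 S i) in
  [/\ valid_run (table_turn M c D) (server_bit c D (A (take i S)))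
        (client_bit c D (nth m0 S i)) t,
      server_out m0 c D t = nth m0 S i, server_bits (table_turn M c D) t = table_size c D
    & client_bits (table_turn M c D) t <= k * size (codeword (A (take i S)) (nth m0 S i)) + 2].
  move=> lt_i /=; have /encS [uniq_i a_i] : onth S i = Some (nth m0 S i).
    by rewrite onthE (nth_map m0).
  have [run out srv ->] := table_run m0 D card_le uniq_i a_i.
  by split=> //; exact: size_reply_le.
have ts_iP i t : onth ts i = Some t ->
    i < size S /\ t = transcript c D (A (take i S)) (nth m0 S i).
  move=> ts_i; have lt_i : i < size S by rewrite -size_ts -onthTE ts_i.
  by move/(onth_nth [::]): ts_i => <-; rewrite nth_mkseq.
exists ts; split.
- split=> // i a t /(onth_nth m0) <- /ts_iP [lt_i ->].
  rewrite /turn_at /= history_msgs_srv_hist ?(ltnW lt_i) //.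
  by have [run out _ _] := run_i i lt_i.
- move=> i t /ts_iP [lt_i ->]; rewrite /turn_at /=.
  by have [_ _ srv _] := run_i i lt_i.
- rewrite /total_client_bits /enc_length size_ts zip_iota_mkseq.
  rewrite -[X in zip _ X](mkseq_nth m0 S) zip_iota_mkseq -!map_comp.
  rewrite -{3}(size_iota 0 (size S)); apply: sumn_map_le_affine => i.
  rewrite mem_iota /= /turn_at => lt_i.
  by have [_ _ _ cli] := run_i i lt_i.
Qed.

End Protocol.

Lemma INR_expn m e : INR (m ^ e) = pow (INR m) e.
Proof. by elim: e => [|e IH] //=; rewrite expnS mult_INR IH. Qed.

Lemma le_Rpower_inv (x y : R) k :
  (0 < y)%R -> 0 < k -> (pow y k <= x)%R -> (y <= Rpower x (/ INR k))%R.
Proof.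
move=> y_gt0 k_gt0 le_yx.
have k_neq0 : INR k <> 0%R by apply: not_0_INR; lia.
have -> : y = Rpower (pow y k) (/ INR k).
  by rewrite -Rpower_pow // Rpower_mult Rinv_r // Rpower_1.
apply: Rle_Rpower_l; first by apply/Rlt_le/Rinv_0_lt_compat/lt_0_INR/ltP.
by split; first exact: pow_lt.
Qed.

Lemma pow2_le_log2 e (x : R) : (pow 2 e <= x)%R -> (INR e <= log2 x)%R.
Proof.
move=> le_x; have ln2_gt0 : (0 < ln 2)%R by rewrite -ln_1; apply: ln_increasing; lra.
have pow_gt0 : (0 < pow 2 e)%R by apply: pow_lt; lra.
have : (ln (pow 2 e) <= ln x)%R.
  by case: (Rle_lt_or_eq_dec _ _ le_x) => [/(ln_increasing _ _ pow_gt0) | ->]; lra.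
rewrite ln_pow; last lra.
move=> le_ln; apply: (Rmult_le_reg_r (ln 2)) => //.
by rewrite /log2 /Rdiv Rmult_assoc Rinv_l ?Rmult_1_r //; lra.
Qed.

Lemma ceil_div_bounds c k : 0 < k ->
  c <= k * ((c + k.-1) %/ k) /\ ((c + k.-1) %/ k).-1 * k <= c.-1.
Proof. by move=> k_gt0; split; nia. Qed.

Lemma pow2_le_root n k D : 0 < k -> 2 ^ (D.-1 * k) <= n ->
  (INR (2 ^ D) <= 2 * Rpower (INR n) (/ INR k))%R.
Proof.
move=> k_gt0 le_n.
have le_D : (INR (2 ^ D) <= 2 * INR (2 ^ D.-1))%R.
  by rewrite -[2%R]/(INR 2) -mult_INR; apply/le_INR/leP; case: D {le_n} => //= D; rewrite expnS.
apply: (Rle_trans _ _ _ le_D); apply: Rmult_le_compat_l; first lra.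
apply: le_Rpower_inv => //; first by apply/lt_0_INR/ltP; rewrite expn_gt0.
by rewrite -INR_expn -expnM; apply/le_INR/leP.
Qed.

Lemma up_log_le_log2 n : 2 <= n -> (INR (up_log 2 n).+1 <= 3 * log2 (INR n))%R.
Proof.
move=> n_ge2; have lt_n := up_log_gtn (isT : 1 < 2) n_ge2.
have log_ge1 : (1 <= log2 (INR n))%R.
  by apply: (@pow2_le_log2 1); rewrite /= Rmult_1_r; apply: (le_INR 2); apply/leP.
have : (INR (up_log 2 n).-1 <= log2 (INR n))%R.
  by apply: pow2_le_log2; rewrite -[2%R]/(INR 2) -INR_expn; apply/le_INR/leP/ltnW.
have -> : (up_log 2 n).+1 = ((up_log 2 n).-1 + 2)%N.
  by have := up_log_gt0 2 n; rewrite n_ge2 /=; lia.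
rewrite plus_INR /=; lra.
Qed.

Lemma table_size_le k n (c := up_log 2 n) (D := (c + k.-1) %/ k) :
  0 < k -> 2 <= n ->
  (INR (table_size c D) <= 12 * (Rpower (INR n) (/ INR k) * log2 (INR n)))%R.
Proof.
move=> k_gt0 n_ge2; have [_ le_Dc] := ceil_div_bounds c k_gt0.
have le_pow : 2 ^ (D.-1 * k) <= n.
  by apply: leq_trans (ltnW (up_log_gtn (p := 2) isT n_ge2)); rewrite leq_exp2l.
have pow_D := pow2_le_root k_gt0 le_pow.
have c_log : (INR c.+1 <= 3 * log2 (INR n))%R := up_log_le_log2 n_ge2.
have le_size : table_size c D <= 2 * 2 ^ D * c.+1.
  by rewrite /table_size -expnS -size_words leq_mul2r leqnSn orbT.
apply: (Rle_trans _ _ _ (le_INR _ _ (elimT leP le_size))).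
rewrite !mult_INR -[INR 2]/2%R.
have := pos_INR (2 ^ D); have := pos_INR c.+1; nra.
Qed.

Theorem theorem1 (k : nat) (hk : 1 <= k) :
  exists (C : R) (N : nat), (0 < C)%R /\
  forall (n : nat) (M : finType) (A : dyn_code M),
    2 <= n -> N <= n -> #|M| = n ->
    exists P : protocol M,
      forall (S : seq M) (owner : nat -> nat),
        encodable A S ->
        exists ts : seq bitseq,
          transmits P S owner ts /\
          (forall i t, onth ts i = Some t ->
             (INR (server_bits (turn_at P S owner ts i) t)
                <= C * (Rpower (INR n) (/ INR k) * log2 (INR n)))%R) /\
          total_client_bits P S owner ts <= k * enc_length A S + 2 * size S.
Proof.
exists 12%R, 0; split=> [|n M A n_ge2 _ card_M]; first lra.
have [m0 _] : exists m0 : M, true by apply/card_gt0P; rewrite card_M; lia.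
set c := up_log 2 n; set D := (c + k.-1) %/ k.
have card_le : #|M| <= 2 ^ c by rewrite card_M; exact: up_logP.
have [c_le _] := ceil_div_bounds c hk.
exists (table_protocol m0 c D A) => S owner encS.
have [ts [sends srv cli]] := table_protocol_sends m0 card_le owner hk c_le encS.
exists ts; do 2!split=> //; move=> i t /srv ->; exact: table_size_le.
Qed.
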